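(* Let $s\ge1$ and $k\ge0$ be integers with $2s>k$. Then: (a) for all partitions $\lambda,\mu$ with $|\lambda|+|\mu|\le k$, the set $\Lambda^s_{\lambda,\mu}$ is (the diagram of) a partition with $|\Lambda^s_{\lambda,\mu}|=s(2s+1)+2|\lambda|+2|\mu|$ and $\mathrm{cweight}(\Lambda^s_{\lambda,\mu})=s$; (b) the map $(\lambda,\mu)\mapsto\Lambda^s_{\lambda,\mu}$ is a bijection from the set of pairs of partitions with $|\lambda|+|\mu|\le k$ onto the set of partitions $\nu$ with $\mathrm{cweight}(\nu)=s$ and $|\nu|\le s(2s+1)+2k$.
   Context: A partition $\nu=(\nu_1\ge\nu_2\ge\cdots)$ is identified with its diagram $\{(x,y)\in\mathbb Z^2:1\le x\le\ell(\nu),\,1\le y\le\nu_x\}$ (row index $x$, column index $y$); $|\nu|$ is the number of boxes and $\ell(\nu)$ the number of nonzero parts. The box $(x,y)$ has color $x-y\bmod 2\in\mathbb Z/2\mathbb Z$. The cweight of $\nu$ is $\mathrm{cweight}(\nu)=\#\{\text{boxes of color }1\}-\#\{\text{boxes of color }0\}$. For $s\ge1$ let $\Lambda^s=(2s,2s-1,\dots,2,1)$ (so $|\Lambda^s|=s(2s+1)$). For partitions $\lambda,\mu$ let $\Lambda^s_{\lambda,\mu}=\Lambda^s\cup\{(x,\,2s-x+1+t):1\le x\le\ell(\lambda),\,1\le t\le2\lambda_x\}\cup\{(2s-y+1+t,\,y):1\le y\le\ell(\mu),\,1\le t\le 2\mu_y\}$, i.e. $\Lambda^s$ with row $x$ lengthened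 by $2\lambda_x$ boxes and column $y$ lengthened by $2\mu_y$ boxes. *)

From mathcomp Require Import all_boot all_order all_algebra.
Set Implicit Arguments. Unset Strict Implicit. Unset Printing Implicit Defensive.
Import Order.TTheory GRing.Theory Num.Theory.

Definition is_partition (nu : seq nat) : bool :=
  sorted geq nu && all (fun a => 0 < a) nu.

Definition psize (nu : seq nat) : nat := sumn nu.

(* the i-th part, 1-indexed, for i : int (0 if out of range) *)
Definition part (nu : seq nat) (x : int) : nat := nth 0 nu (absz x).-1.

Local Open Scope ring_scope.

Definition diagram (nu : seq nat) (p : int * int) : bool :=
  let: (x, y) := p in
  [&& 1 <= x, x <= (size nu)%:Z, 1 <= y & y <= (part nu x)%:Z].

(* cweight(nu) = #{boxes of color 1} - #{boxes of color 0};
   box (i+1, j+1) has color (i+1)-(j+1) = i+j mod 2. *)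
Definition cweight (nu : seq nat) : int :=
  \sum_(i < size nu) \sum_(j < nth 0%N nu i)
     (if odd (i + j) then 1 else -1).

Definition Lset (s : nat) (lam mu : seq nat) (p : int * int) : bool :=
  let: (x, y) := p in
  let S := (2 * s)%N%:Z in
  [|| [&& 1 <= x, 1 <= y & x + y <= S + 1]
    , [&& 1 <= x, x <= (size lam)%:Z,
          S - x + 1 < y & y <= S - x + 1 + 2 * (part lam x)%:Z]
    | [&& 1 <= y, y <= (size mu)%:Z,
          S - y + 1 < x & x <= S - y + 1 + 2 * (part mu y)%:Z]
  ].

From mathcomp Require Import all_boot all_order all_algebra.
From mathcomp Require Import zify.
Import Order.TTheory GRing.Theory Num.Theory.
Set Implicit Arguments. Unset Strict Implicit. Unset Printing Implicit Defensive.

(* We index boxes from 0: a partition ν is the down-set {(i, j) | j < ν_i}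
   of ℕ², the box (i, j) has sign sgn (i + j), and Λ^s_{λ,μ} becomes
   [lambda_shape], an instance of [hook_shape]: the staircase {i + j < 2s}
   together with, for the first i0 rows, a horizontal arm starting at the
   staircase's edge and, for the first j0 columns, a vertical arm.
   Sizes and cweights of such shapes are finite sums over a large square
   grid ([box_count], [box_sign]); the staircase contributes s(2s+1) boxes
   and cweight s, and an arm of length a contributes a boxes and cweight
   -(a mod 2) ([box_count_hook], [box_sign_hook]).
   (a) Λ^s_{λ,μ} is a down-set with arms of even length 2λ_i, 2μ_j, so it
       is a partition of the stated size and cweight.
   (b) The end of the arm of row i determines λ_i (and symmetrically μ_j),
       which gives injectivity. For surjectivity, a partition of cweight at
       least s contains the staircase ([staircase_contained]); the size bound
       yields a row i0 <= 2s ending inside the staircase ([staircase_gap]);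
       cutting ν along i0 exhibits it as a hook shape ([hook_decomposition])
       whose arms are all even because cweight ν = s ([hook_arms_even]), and
       halving the arm lengths recovers λ and μ. *)

Ltac split_andb := repeat match goal with
 | H : is_true (_ && _) |- _ =>
     let H1 := fresh "H" in let H2 := fresh "H" in case/andP: H => H1 H2
 end.

Definition sgn (m : nat) : int := if odd m then 1%R else (-1)%R.

(* Signed weight of a row segment of n boxes whose first box has parity a:
   the signs alternate, so only an odd length leaves a contribution. *)
Definition seg_sign (a n : nat) : int := if odd n then sgn a else 0%R.

Lemma sum_sgn_segment a n : (\sum_(j < n) sgn (a + j) = seg_sign a n)%R.
Proof.
elim: n => [|n IH]; first by rewrite big_ord0 /seg_sign.
rewrite big_ord_recr /= IH /seg_sign /sgn oddS oddD.
by case: (odd a); case: (odd n).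
Qed.

Definition parity (e : nat) : int := if odd e then 1%R else 0%R.

Lemma parity_ge0 e : (0 <= parity e)%R.
Proof. by rewrite /parity; case: ifP. Qed.

Lemma Posz_sum n (f : nat -> nat) :
  Posz (\sum_(i < n) f i) = (\sum_(i < n) Posz (f i))%R.
Proof.
elim: n => [|n IH]; first by rewrite !big_ord0.
by rewrite !big_ord_recr /= PoszD IH.
Qed.

Section BigWindows.
Variables (R : Type) (idx : R) (op : Monoid.law idx).

Lemma big_ord_window (F : nat -> R) a n M : a + n <= M ->
  \big[op/idx]_(j < M) (if (a <= j) && (j < a + n) then F j else idx)
  = \big[op/idx]_(t < n) F (a + t).
Proof.
move=> H.
rewrite -big_mkcond /= -(big_mkord (fun j => (a <= j) && (j < a + n))).
rewrite (@big_cat_nat _ _ _ a) /=; [|lia|lia].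
rewrite (@big_cat_nat _ _ _ (a + n) a) /=; [|lia|lia].
have E1 : \big[op/idx]_(0 <= i < a | (a <= i) && (i < a + n)) F i = idx.
  by rewrite big_nat_cond big_pred0 // => j; case: (ltnP j a) => Hj /=; rewrite ?andbF.
have E3 : \big[op/idx]_(a + n <= i < M | (a <= i) && (i < a + n)) F i = idx.
  by rewrite big_nat_cond big_pred0 // => j; case: (leqP (a + n) j) => Hj /=; rewrite ?andbF.
rewrite E1 E3 Monoid.mul1m Monoid.mulm1 big_nat_cond.
rewrite (eq_bigl (fun j => a <= j < a + n)); last first.
  by move=> j /=; case: (a <= j < a + n); rewrite ?andbT.
rewrite -{1}(add0n a) big_addn addKn big_mkord.
by apply: eq_big => [i|i _]; [rewrite leq_addl /= addnC ltn_add2l ltn_ord | rewrite addnC].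
Qed.

Lemma big_ord_prefix (F : nat -> R) n M : n <= M ->
  \big[op/idx]_(j < M) (if j < n then F j else idx) = \big[op/idx]_(j < n) F j.
Proof. by move=> H; rewrite -(@big_ord_window F 0 n M). Qed.

Lemma big_ord_widen_idx (F : nat -> R) n M :
  n <= M -> (forall i, n <= i -> F i = idx) ->
  \big[op/idx]_(i < n) F i = \big[op/idx]_(i < M) F i.
Proof.
move=> H HF; rewrite (big_ord_widen M F H) big_mkcond; apply: eq_bigr => i _.
by case: ltnP => // h; rewrite HF.
Qed.

Lemma if_or3_disjoint (a b c : bool) (x : R) :
  ~~ (a && b) -> ~~ (a && c) -> ~~ (b && c) ->
  (if [|| a, b | c] then x else idx) =
  op (op (if a then x else idx) (if b then x else idx)) (if c then x else idx).
Proof.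
by case: a; case: b; case: c => //= _ _ _; rewrite ?Monoid.mul1m ?Monoid.mulm1.
Qed.

End BigWindows.

Definition box_count M (P : nat -> nat -> bool) : nat :=
  \sum_(i < M) \sum_(j < M) (if P i j then 1 else 0).

Definition box_sign M (P : nat -> nat -> bool) : int :=
  (\sum_(i < M) \sum_(j < M) (if P i j then sgn (i + j) else 0))%R.

Lemma eq_box_count M (P P' : nat -> nat -> bool) :
  P =2 P' -> box_count M P = box_count M P'.
Proof. by move=> H; apply: eq_bigr => i _; apply: eq_bigr => j _; rewrite H. Qed.

Lemma eq_box_sign M (P P' : nat -> nat -> bool) :
  P =2 P' -> box_sign M P = box_sign M P'.
Proof. by move=> H; apply: eq_bigr => i _; apply: eq_bigr => j _; rewrite H. Qed.

Definition hook_shape (s i0 j0 : nat) (r q : nat -> nat) (i j : nat) : bool :=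
  [|| i + j < 2 * s, (i < i0) && (2 * s - i <= j) && (j < r i)
    | (j < j0) && (2 * s - j <= i) && (i < q j)].

Section HookSums.
Variables (R : Type) (idx : R) (op : Monoid.com_law idx).
Variables (M : nat) (F : nat -> nat -> R).

Lemma big_staircase s : 2 * s <= M ->
  \big[op/idx]_(i < M) \big[op/idx]_(j < M) (if i + j < 2 * s then F i j else idx)
  = \big[op/idx]_(i < 2 * s) \big[op/idx]_(j < 2 * s - i) F i j.
Proof.
move=> H.
rewrite (eq_bigr (fun i : 'I_M => if i < 2 * s then
   \big[op/idx]_(j < 2 * s - i) F i j else idx)).
  exact: (big_ord_prefix op (fun i => \big[op/idx]_(j < 2 * s - i) F i j) H).
move=> i _; case: ltnP => Hi /=.
  rewrite -(@big_ord_prefix _ _ op (F i) (2 * s - i) M); last lia.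
  by apply: eq_bigr => j _; congr (if _ then _ else _); lia.
by rewrite big1 // => j _; case: ifP => //; lia.
Qed.

Lemma big_row_arms s i0 (r : nat -> nat) :
  i0 <= M -> i0 <= 2 * s -> (forall i, i < i0 -> 2 * s - i <= r i <= M) ->
  \big[op/idx]_(i < M) \big[op/idx]_(j < M)
     (if (i < i0) && (2 * s - i <= j) && (j < r i) then F i j else idx)
  = \big[op/idx]_(i < i0) \big[op/idx]_(t < r i - (2 * s - i)) F i (2 * s - i + t).
Proof.
move=> H1 H2 H3.
rewrite (eq_bigr (fun i : 'I_M => if i < i0 then
   \big[op/idx]_(t < r i - (2 * s - i)) F i (2 * s - i + t) else idx)).
  exact: (big_ord_prefix op
    (fun i => \big[op/idx]_(t < r i - (2 * s - i)) F i (2 * s - i + t)) H1).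
move=> i _; case: ltnP => Hi /=; last by rewrite big1.
have /andP [Ha Hb] := H3 _ Hi.
by rewrite -(@big_ord_window _ _ op (F i) (2 * s - i) _ M) subnKC.
Qed.

End HookSums.

Lemma big_hook_shape (R : Type) (idx : R) (op : Monoid.com_law idx) M s i0 j0
    (r q : nat -> nat) (F : nat -> nat -> R) :
  i0 + j0 <= 2 * s -> 2 * s <= M ->
  (forall i, i < i0 -> 2 * s - i <= r i <= M) ->
  (forall j, j < j0 -> 2 * s - j <= q j <= M) ->
  \big[op/idx]_(i < M) \big[op/idx]_(j < M)
     (if hook_shape s i0 j0 r q i j then F i j else idx)
  = op (op (\big[op/idx]_(i < 2 * s) \big[op/idx]_(j < 2 * s - i) F i j)
           (\big[op/idx]_(i < i0) \big[op/idx]_(t < r i - (2 * s - i))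
               F i (2 * s - i + t)))
       (\big[op/idx]_(j < j0) \big[op/idx]_(t < q j - (2 * s - j))
               F (2 * s - j + t) j).
Proof.
move=> H0 HM Hr Hq.
have disjoint_parts i j : (if hook_shape s i0 j0 r q i j then F i j else idx) =
   op (op (if i + j < 2 * s then F i j else idx)
          (if (i < i0) && (2 * s - i <= j) && (j < r i) then F i j else idx))
      (if (j < j0) && (2 * s - j <= i) && (i < q j) then F i j else idx).
  by apply: if_or3_disjoint; apply/negP => H; split_andb; lia.
under eq_bigr => i _ do under eq_bigr => j _ do rewrite disjoint_parts.
rewrite (eq_bigr (fun i : 'I_M => op (op
   (\big[op/idx]_(j < M) (if i + j < 2 * s then F i j else idx))
   (\big[op/idx]_(j < M) (if (i < i0) && (2 * s - i <= j) && (j < r i)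
                          then F i j else idx)))
   (\big[op/idx]_(j < M) (if (j < j0) && (2 * s - j <= i) && (i < q j)
                          then F i j else idx)))); last first.
  by move=> i _; rewrite -!big_split.
rewrite !big_split /= big_staircase // big_row_arms //; [|lia|lia].
congr (op _ _); rewrite exchange_big /=.
by apply: (big_row_arms op (fun j i => F i j)) => //; lia.
Qed.

Lemma triangle_sum n : 2 * (\sum_(i < n) (n - i)) = n * n.+1.
Proof.
elim: n => [|n IH]; first by rewrite big_ord0.
rewrite big_ord_recl subn0.
rewrite (eq_bigr (fun i : 'I_n => n - i)); last by move=> i _; rewrite /bump /= subSS.
by rewrite mulnDr IH; nia.
Qed.

Definition staircase_sign n : int := (\sum_(i < n) seg_sign i (n - i))%R.

Lemma staircase_signS n : staircase_sign n.+1 = (seg_sign 0 n.+1 - staircase_sign n)%R.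
Proof.
rewrite /staircase_sign big_ord_recl subn0 -sumrN; congr (_ + _)%R.
apply: eq_bigr => i _; rewrite /bump /= subSS /seg_sign /sgn /=.
by case: (odd (n - i)); case: (odd i).
Qed.

Lemma staircase_sign_even s :
  staircase_sign (2 * s) = Posz s /\ staircase_sign (2 * s).+1 = (- Posz s.+1)%R.
Proof.
elim: s => [|s [IH1 IH2]].
  by rewrite /staircase_sign big_ord0 /= big_ord_recl big_ord0.
have -> : 2 * s.+1 = (2 * s).+1.+1 by lia.
rewrite !staircase_signS IH1 /seg_sign /= oddM /= /sgn /=.
by split; lia.
Qed.

Section HookCounts.
Variables (M s i0 j0 : nat) (r q : nat -> nat).
Hypothesis arms_fit : i0 + j0 <= 2 * s.
Hypothesis grid_large : 2 * s <= M.
Hypothesis row_arms : forall i, i < i0 -> 2 * s - i <= r i <= M.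
Hypothesis col_arms : forall j, j < j0 -> 2 * s - j <= q j <= M.

Lemma box_count_hook : box_count M (hook_shape s i0 j0 r q) =
  s * (2 * s + 1) + \sum_(i < i0) (r i - (2 * s - i))
    + \sum_(j < j0) (q j - (2 * s - j)).
Proof.
rewrite /box_count (big_hook_shape addn (fun _ _ => 1)) //.
have sum1 n : \big[addn/0]_(t < n) 1 = n by rewrite sum_nat_const card_ord muln1.
rewrite (eq_bigr (fun i : 'I_(2 * s) => 2 * s - i)); last by move=> i _; exact: sum1.
rewrite (eq_bigr (fun i : 'I_i0 => r i - (2 * s - i))); last by move=> i _; exact: sum1.
rewrite (eq_bigr (fun j : 'I_j0 => q j - (2 * s - j))); last by move=> j _; exact: sum1.
have T := triangle_sum (2 * s); congr (_ + _ + _).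
change (\sum_(i < 2 * s) (2 * s - i) = s * (2 * s + 1)); nia.
Qed.

(* Every box of an arm beyond the staircase has sign sgn (2s + t), so an
   arm of length a contributes -(a mod 2) to the cweight. *)
Lemma box_sign_hook : box_sign M (hook_shape s i0 j0 r q) =
  (Posz s - \sum_(i < i0) parity (r i - (2 * s - i))
          - \sum_(j < j0) parity (q j - (2 * s - j)))%R.
Proof.
rewrite /box_sign (big_hook_shape +%R (fun i j => sgn (i + j))) //=.
under eq_bigr => i _ do rewrite sum_sgn_segment.
have [E _] := staircase_sign_even s; rewrite /staircase_sign in E; rewrite E.
rewrite -!sumrN; congr (_ + _ + _)%R; apply: eq_bigr => i _.
- rewrite (eq_bigr (fun t : 'I_ _ => sgn (2 * s + t))); last first.
    by move=> t _; congr sgn; have := ltn_ord i; lia.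
  by rewrite sum_sgn_segment /seg_sign /parity /sgn oddM /=; case: ifP.
- rewrite (eq_bigr (fun t : 'I_ _ => sgn (2 * s + t))); last first.
    by move=> t _; congr sgn; have := ltn_ord i; lia.
  by rewrite sum_sgn_segment /seg_sign /parity /sgn oddM /=; case: ifP.
Qed.

End HookCounts.

Lemma geq_trans : transitive geq.
Proof. by move=> a b c h1 h2; apply: leq_trans h2 h1. Qed.

Lemma partition_nth_mono nu i i' : sorted geq nu -> i <= i' -> nth 0 nu i' <= nth 0 nu i.
Proof.
move=> Hs Hii.
case: (ltnP i' (size nu)) => h; last by rewrite nth_default.
apply: (sorted_leq_nth geq_trans (fun x => leqnn x) 0 Hs) => //=.
by rewrite unfold_in /=; lia.
Qed.

Lemma nth_le_sumn (t : seq nat) i : nth 0 t i <= sumn t.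
Proof.
elim: t i => [|a t IH] [|i] //=; first by rewrite leq_addr.
by rewrite (leq_trans (IH i)) // leq_addl.
Qed.

Lemma size_le_psize t : all (fun a => 0 < a) t -> size t <= psize t.
Proof.
rewrite /psize; elim: t => [|a t IH] //= /andP [h1 h2].
by have := IH h2; lia.
Qed.

Lemma psize_rows nu : psize nu = \sum_(i < size nu) nth 0 nu i.
Proof. by rewrite /psize sumnE (big_nth 0) big_mkord. Qed.

Lemma sum_double_rows (t : seq nat) :
  \sum_(i < size t) (2 * nth 0 t i) = 2 * psize t.
Proof. by rewrite -big_distrr /= psize_rows. Qed.

Lemma cweight_rows nu : cweight nu = (\sum_(i < size nu) seg_sign i (nth 0%N nu i))%R.
Proof. by apply: eq_bigr => i _; rewrite -sum_sgn_segment. Qed.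

Lemma diagram_box nu i j : diagram nu (Posz i.+1, Posz j.+1) = (j < nth 0 nu i).
Proof.
rewrite /diagram /part /=.
case: (ltnP i (size nu)) => h; last first.
  by rewrite nth_default //; apply/negbTE/negP => /andP [h1 h2]; lia.
by apply/idP/idP => [/andP [h1 h2]|h']; [lia | apply/andP; split; lia].
Qed.

Section PartitionInGrid.
Variables (nu : seq nat) (M : nat).
Hypotheses (rows_fit : size nu <= M) (parts_fit : forall i, nth 0 nu i <= M).

Lemma box_count_partition : box_count M (fun i j => j < nth 0 nu i) = psize nu.
Proof.
rewrite psize_rows /box_count.
rewrite (big_ord_widen_idx addn (F := fun i => nth 0 nu i) rows_fit); last first.
  by move=> i hi; rewrite nth_default.
apply: eq_bigr => i _.
by rewrite (big_ord_prefix addn (fun j => 1)) // sum_nat_const card_ord muln1.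
Qed.

Lemma box_sign_partition : box_sign M (fun i j => j < nth 0 nu i) = cweight nu.
Proof.
rewrite cweight_rows /box_sign.
rewrite (big_ord_widen_idx +%R (F := fun i => seg_sign i (nth 0 nu i)) rows_fit); last first.
  by move=> i hi; rewrite nth_default.
apply: eq_bigr => i _.
by rewrite (big_ord_prefix +%R (fun j => sgn (i + j))) // sum_sgn_segment.
Qed.

End PartitionInGrid.

(* Dropping the zero parts of a weakly decreasing sequence only removes its
   tail, which reads as 0 anyway. *)
Lemma nth_filter_pos (t : seq nat) i : sorted geq t ->
  nth 0 [seq x <- t | 0 < x] i = nth 0 t i.
Proof.
elim: t i => [|a t IH] i //= Hs.
case: (posnP a) => [Ha|Ha]; last by case: i => [//|i] /=; rewrite IH // (path_sorted Hs).
subst a; have Hall := order_path_min geq_trans Hs.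
have zero_tail x : x \in t -> x = 0.
  by move/allP: Hall => /[apply] /=; case: x.
rewrite (@eq_in_filter _ _ pred0); last by move=> x /zero_tail ->.
rewrite filter_pred0 nth_nil; case: i => [//|i] /=.
case: (ltnP i (size t)) => hi; last by rewrite nth_default.
by rewrite (zero_tail _ (mem_nth 0 hi)).
Qed.

(* The length of row i of a down-set P contained in [0, M)². *)
Definition rowlen M (P : nat -> nat -> bool) i := find (fun j => ~~ P i j) (iota 0 M).

Lemma rowlen_le M (P : nat -> nat -> bool) i : rowlen M P i <= M.
Proof. by have := find_size (fun j => ~~ P i j) (iota 0 M); rewrite size_iota. Qed.

Lemma rowlenP M (P : nat -> nat -> bool) :
  (forall i j j', j' <= j -> P i j -> P i j') ->
  (forall i j, P i j -> j < M) ->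
  forall i j, P i j = (j < rowlen M P i).
Proof.
move=> Hd Hb i j; have Hc := rowlen_le M P i; rewrite /rowlen in Hc *.
set c := find _ _ in Hc *.
case: (ltnP j c) => Hj.
  have := before_find 0 Hj; rewrite nth_iota; last lia.
  by rewrite add0n => /negbFE.
apply/negbTE/negP => HP.
have Hh : has (fun j => ~~ P i j) (iota 0 M) by rewrite has_find size_iota; have := Hb _ _ HP; lia.
have := nth_find 0 Hh; rewrite -/c nth_iota; last by have := Hb _ _ HP; lia.
by rewrite add0n (Hd _ _ _ Hj HP).
Qed.

Lemma partition_of_downset M (P : nat -> nat -> bool) :
  (forall i j j', j' <= j -> P i j -> P i j') ->
  (forall i i' j, i' <= i -> P i j -> P i' j) ->
  (forall i j, P i j -> (i < M) && (j < M)) ->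
  exists nu, [/\ is_partition nu, (forall i j, (j < nth 0 nu i) = P i j),
     size nu <= M & forall i, nth 0 nu i <= M].
Proof.
move=> Hdj Hdi Hb.
have HbM i j : P i j -> j < M by move/Hb/andP => [].
have Hrow := rowlenP Hdj HbM.
have Hmono x y : x <= y -> rowlen M P y <= rowlen M P x.
  move=> hxy; rewrite leqNgt; apply/negP => hlt.
  have : P y (rowlen M P x) by rewrite Hrow.
  by move/(Hdi _ _ _ hxy); rewrite Hrow ltnn.
set rows := [seq rowlen M P i | i <- iota 0 M].
have Hs : sorted geq rows.
  by apply: (homo_sorted (e := leq)); [move=> x y; apply: Hmono | exact: iota_sorted].
have Hnth i : nth 0 [seq x <- rows | 0 < x] i = rowlen M P i.
  rewrite nth_filter_pos //; case: (ltnP i M) => hi.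
    by rewrite (nth_map 0) ?size_iota // nth_iota.
  rewrite nth_default ?size_map ?size_iota //.
  apply/esym/eqP; rewrite -leqn0 leqNgt; apply/negP => h.
  have : P i 0 by rewrite Hrow.
  by move/Hb/andP => [h1 _]; lia.
exists [seq x <- rows | 0 < x]; split.
- by rewrite /is_partition sorted_filter ?filter_all //; exact: geq_trans.
- by move=> i j; rewrite Hnth Hrow.
- by rewrite size_filter (leq_trans (count_size _ _)) // size_map size_iota.
- by move=> i; rewrite Hnth rowlen_le.
Qed.

Definition lambda_shape s (lam mu : seq nat) : nat -> nat -> bool :=
  hook_shape s (size lam) (size mu) (fun i => 2 * s - i + 2 * nth 0 lam i)
    (fun j => 2 * s - j + 2 * nth 0 mu j).

Lemma lambda_shape_sym s lam mu i j : lambda_shape s lam mu i j = lambda_shape s mu lam j i.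
Proof. by rewrite /lambda_shape /hook_shape addnC; case: (_ < _); case: (_ && _); case: (_ && _). Qed.

Lemma Lset_box s lam mu i j : size lam <= 2 * s -> size mu <= 2 * s ->
  Lset s lam mu (Posz i.+1, Posz j.+1) = lambda_shape s lam mu i j.
Proof.
move=> Hl Hm; rewrite /Lset /lambda_shape /hook_shape /part /=.
by congr [|| _, _ | _]; apply/idP/idP => ?; split_andb; repeat (apply/andP; split); lia.
Qed.

(* Lset only contains boxes with positive coordinates, hence it is a
   diagram as soon as it agrees with one on those boxes. *)
Lemma diagram_eq_Lset nu s lam mu : size lam <= 2 * s -> size mu <= 2 * s ->
  (forall i j, (j < nth 0 nu i) = lambda_shape s lam mu i j) ->
  forall p, diagram nu p = Lset s lam mu p.
Proof.
move=> Hl Hm H [[[|i]|x] [[|j]|y]]; try by rewrite diagram_box Lset_box.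
all: rewrite /diagram /Lset; transitivity false;
  [apply/negbTE/negP => H0; split_andb; lia
  | apply/esym/negbTE/negP => /or3P [] H0; split_andb; lia].
Qed.

Lemma lambda_shape_left_closed s lam mu : sorted geq mu ->
  forall i j j', j' <= j -> lambda_shape s lam mu i j -> lambda_shape s lam mu i j'.
Proof.
move=> Hms i j j' hj /or3P [h|h|h]; split_andb; apply/or3P.
- by apply: Or31; lia.
- by case: (ltnP (i + j') (2 * s)) => h'; [apply: Or31 | apply: Or32];
    repeat (apply/andP; split); lia.
- case: (ltnP (i + j') (2 * s)) => h'; first by apply: Or31.
  have := partition_nth_mono Hms hj.
  by move=> hh; apply: Or33; repeat (apply/andP; split); lia.
Qed.

Lemma lambda_shape_up_closed s lam mu : sorted geq lam ->
  forall i i' j, i' <= i -> lambda_shape s lam mu i j -> lambda_shape s lam mu i' j.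
Proof.
move=> Hls i i' j hi; rewrite !(lambda_shape_sym s lam).
exact: lambda_shape_left_closed.
Qed.

Section LambdaShapeCounts.
Variables (s M : nat) (lam mu : seq nat).
Hypothesis sizes_fit : size lam + size mu <= 2 * s.
Hypothesis grid_large : 2 * s + 2 * (psize lam + psize mu) + 1 <= M.

Let row_arms i : i < size lam -> 2 * s - i <= 2 * s - i + 2 * nth 0 lam i <= M.
Proof. by move=> _; have := nth_le_sumn lam i; have := grid_large; rewrite /psize; lia. Qed.

Let col_arms j : j < size mu -> 2 * s - j <= 2 * s - j + 2 * nth 0 mu j <= M.
Proof. by move=> _; have := nth_le_sumn mu j; have := grid_large; rewrite /psize; lia. Qed.

Lemma lambda_shape_bounded i j : lambda_shape s lam mu i j -> (i < M) && (j < M).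
Proof.
rewrite /lambda_shape /hook_shape.
case/or3P => [h|/andP [/andP [hi _] hj]|/andP [/andP [hj _] hi]]; apply/andP.
- by split; lia.
- by have := row_arms hi; split; lia.
- by have := col_arms hj; split; lia.
Qed.

Lemma box_count_lambda : box_count M (lambda_shape s lam mu) =
  s * (2 * s + 1) + 2 * psize lam + 2 * psize mu.
Proof.
rewrite /lambda_shape box_count_hook //; last by lia.
rewrite -!sum_double_rows; congr (_ + _ + _); apply: eq_bigr => i _; lia.
Qed.

Lemma box_sign_lambda : box_sign M (lambda_shape s lam mu) = Posz s.
Proof.
rewrite /lambda_shape box_sign_hook //; last by lia.
by rewrite !big1 ?subr0 // => i _; rewrite addKn /parity oddM.
Qed.

End LambdaShapeCounts.

Lemma lambda_shape_partition s lam mu : is_partition lam -> is_partition mu ->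
  size lam + size mu <= 2 * s ->
  exists nu : seq nat,
    [/\ is_partition nu, (forall p, diagram nu p = Lset s lam mu p),
        psize nu = s * (2 * s + 1) + 2 * psize lam + 2 * psize mu
      & cweight nu = Posz s].
Proof.
move=> /andP [Hls _] /andP [Hms _] Hsz.
set M := 2 * s + 2 * (psize lam + psize mu) + 1.
have [nu [Hnu Hmem Hsize Hnth]] := partition_of_downset
  (lambda_shape_left_closed Hms) (lambda_shape_up_closed Hls)
  (lambda_shape_bounded (M := M) (s := s) Hsz (leqnn M)).
exists nu; split => //.
- by apply: diagram_eq_Lset => //; lia.
- by rewrite -(box_count_partition Hsize Hnth) (eq_box_count M Hmem) box_count_lambda.
- by rewrite -(box_sign_partition Hsize Hnth) (eq_box_sign M Hmem) box_sign_lambda.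
Qed.

(* Injectivity: the arm of row i of Λ^s_{λ,μ} ends exactly at 2s - i + 2λ_i. *)
Section Injectivity.
Variables (s : nat) (lam mu lam' mu' : seq nat).
Hypothesis sizes_lt : size lam + size mu < 2 * s.
Hypothesis same_shape : lambda_shape s lam mu =2 lambda_shape s lam' mu'.

(* The box just right of the staircase in row ℓ(λ) is not in the shape. *)
Lemma lambda_shape_size_le : all (fun a => 0 < a) lam' -> size lam' <= size lam.
Proof.
move=> Hp; rewrite leqNgt; apply/negP => Hlt.
have hpos : 0 < nth 0 lam' (size lam) by apply: (allP Hp); exact: mem_nth.
have : lambda_shape s lam' mu' (size lam) (2 * s - size lam).
  by rewrite /lambda_shape /hook_shape; apply/or3P; apply: Or32; rewrite Hlt leqnn /=; lia.
rewrite -same_shape /lambda_shape /hook_shape => /or3P [] h; split_andb; lia.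
Qed.

Lemma lambda_shape_nth_le i : i < size lam -> i < size lam' ->
  nth 0 lam' i <= nth 0 lam i.
Proof.
move=> Hi Hi'; rewrite leqNgt; apply/negP => Hlt.
set j := 2 * s - i + 2 * nth 0 lam i.
have : lambda_shape s lam' mu' i j.
  rewrite /lambda_shape /hook_shape; apply/or3P; apply: Or32.
  by rewrite Hi' /=; apply/andP; split; rewrite /j; lia.
rewrite -same_shape /lambda_shape /hook_shape /j => /or3P [] h; split_andb; lia.
Qed.

End Injectivity.

Lemma lambda_shape_inj_rows s lam mu lam' mu' :
  is_partition lam -> is_partition lam' ->
  size lam + size mu < 2 * s -> size lam' + size mu' < 2 * s ->
  lambda_shape s lam mu =2 lambda_shape s lam' mu' -> lam = lam'.
Proof.
move=> /andP [_ Hp] /andP [_ Hp'] Hs Hs' HL.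
have HL' : lambda_shape s lam' mu' =2 lambda_shape s lam mu by move=> i j; rewrite HL.
have Esz : size lam = size lam'.
  by apply/eqP; rewrite eqn_leq (lambda_shape_size_le Hs' HL' Hp) (lambda_shape_size_le Hs HL Hp').
apply: (eq_from_nth (x0 := 0)) => // i hi; have hi' : i < size lam' by rewrite -Esz.
by apply/eqP; rewrite eqn_leq (lambda_shape_nth_le Hs' HL' hi' hi) (lambda_shape_nth_le Hs HL hi hi').
Qed.

Lemma lambda_shape_inj s lam mu lam' mu' :
  is_partition lam -> is_partition mu -> is_partition lam' -> is_partition mu' ->
  size lam + size mu < 2 * s -> size lam' + size mu' < 2 * s ->
  (forall p, Lset s lam mu p = Lset s lam' mu' p) -> lam = lam' /\ mu = mu'.
Proof.
move=> Hl Hm Hl' Hm' Hs Hs' HL.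
have HL0 : lambda_shape s lam mu =2 lambda_shape s lam' mu'.
  by move=> i j; rewrite -!Lset_box ?HL //; lia.
split; first exact: lambda_shape_inj_rows HL0.
apply: (lambda_shape_inj_rows (s := s) (mu := lam) (mu' := lam')) => //; try lia.
by move=> i j; rewrite lambda_shape_sym HL0 lambda_shape_sym.
Qed.

Definition contains_staircase s (nu : seq nat) : Prop :=
  forall i, i < 2 * s -> 2 * s - i <= nth 0 nu i.

Lemma cweight_nil : cweight [::] = 0%R.
Proof. by rewrite /cweight big_ord0. Qed.

Lemma cweight_single a : (cweight [:: a] <= 0)%R.
Proof. by rewrite cweight_rows /= big_ord_recl big_ord0 /seg_sign /sgn /=; case: (odd a). Qed.

(* Consecutive rows start with opposite signs, so cweight is peeled off two
   rows at a time. *)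
Lemma cweight_cons2 a b t :
  cweight [:: a, b & t] = (seg_sign 0 a + seg_sign 1 b + cweight t)%R.
Proof.
rewrite !cweight_rows /= !big_ord_recl /= -addrA; congr (_ + (_ + _))%R.
by apply: eq_bigr => i _; rewrite /seg_sign /sgn /bump /= !add0n negbK.
Qed.

(* By induction on pairs of rows: the first two rows contribute at most 1 to
   the cweight, and exactly 1 only if a is even and b odd, in which case
   they are long enough to extend a copy of Λ^(s-1) in the remaining rows. *)
Lemma staircase_contained nu s : is_partition nu -> (Posz s <= cweight nu)%R ->
  contains_staircase s nu.
Proof.
move: (leqnn (size nu)); move: {2}(size nu) => n.
elim: n nu s => [|n IH] nu s hsz hp hs i hi.
  by move: hsz hs; rewrite leqn0 => /nilP ->; rewrite cweight_nil; lia.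
case: nu hsz hp hs => [|a [|b t]] hsz hp hs.
- by move: hs; rewrite cweight_nil; lia.
- by have := le_trans hs (cweight_single a); lia.
have [hba hb0 htb hpt] : [/\ b <= a, 0 < b, nth 0 t 0 <= b & is_partition t].
  move: hp => /andP [/= /andP [hba hpath] /and3P [_ hb0 hpos]].
  split => //; last by rewrite /is_partition (path_sorted hpath).
  by case: t hpath {hsz hpos hs} => [|c t] //= /andP [].
have hszt : size t <= n by move: hsz => /=; lia.
move: hs; rewrite cweight_cons2 /seg_sign /sgn /=.
case: (boolP (~~ odd a && odd b)) => [/andP [/negbTE hoa hob]|hnot] hs.
- move: hs; rewrite hoa hob => hs.
  case: s hs hi => [|s] hs hi; first by [].
  have Ht : contains_staircase s t by apply: IH => //; lia.
  have hb : 2 * s < b.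
    have hbe : b != 2 * s by apply/eqP => E; move: hob; rewrite E oddM.
    case: (posnP s) => [->|s_pos]; first lia.
    have h0 : 2 * s - 0 <= nth 0 t 0 by apply: Ht; lia.
    lia.
  have hab : a != b by apply/eqP => E; move: hob; rewrite -E hoa.
  case: i hi => [|[|i]] hi /=; [lia | lia |].
  have hti : 2 * s - i <= nth 0 t i by apply: Ht; lia.
  lia.
- have hs' : (Posz s <= cweight t)%R.
    by move: hs hnot; case: (odd a); case: (odd b) => //= hs _; lia.
  have Ht : contains_staircase s t by exact: IH.
  have h0 : 2 * s - 0 <= nth 0 t 0 by apply: Ht; lia.
  case: i hi => [|[|i]] hi /=; [lia | lia |].
  have hti : 2 * s - i <= nth 0 t i by apply: Ht; lia.
  lia.
Qed.

Lemma seg_sign_exchange i n m : m <= n -> (seg_sign i n + Posz m <= seg_sign i m + Posz n)%R.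
Proof.
move=> h; case: (eqVneq n m) => [->|hne]; first lia.
by rewrite /seg_sign /sgn; case: (odd n); case: (odd m); case: (odd i); lia.
Qed.

(* Second step: if all rows i <= 2s exceeded the staircase, then comparing
   with the staircase of 2s + 1 rows (of cweight -(s+1)) would force
   |ν| >= s(2s+1) + 4s + 2, beyond the bound since k < 2s. *)
Lemma staircase_gap nu s k : (Posz s <= cweight nu)%R ->
  psize nu <= s * (2 * s + 1) + 2 * k -> k < 2 * s ->
  exists2 i0, i0 <= 2 * s & nth 0 nu i0 <= 2 * s - i0.
Proof.
move=> hcw hsz hk.
case hh : (has (fun i => nth 0 nu i <= 2 * s - i) (iota 0 (2 * s).+1)).
  by move/hasP: hh => [i0]; rewrite mem_iota => hi0 h; exists i0 => //; lia.
exfalso.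
have Hall i : i <= 2 * s -> 2 * s - i < nth 0 nu i.
  move=> hi; move/negbT/hasPn: hh => /(_ i); rewrite mem_iota.
  by move=> /(_ ltac:(lia)); rewrite -ltnNge.
have hM : (2 * s).+1 <= size nu.
  rewrite leqNgt; apply/negP => hlt.
  by have := Hall (2 * s) (leqnn _); rewrite nth_default.
set L := (2 * s).+1.
have exchange : (cweight nu + \sum_(i < size nu) Posz (L - i)
    <= \sum_(i < size nu) seg_sign i (L - i) + \sum_(i < size nu) Posz (nth 0%N nu i))%R.
  rewrite cweight_rows -!big_split /=; apply: ler_sum => i _; apply: seg_sign_exchange.
  by case: (leqP i (2 * s)) => hi; [have := Hall i hi | rewrite /L]; lia.
have E1 : (\sum_(i < size nu) seg_sign i (L - i))%R = staircase_sign L.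
  symmetry; apply: (big_ord_widen_idx +%R (F := fun i => seg_sign i (L - i)) hM).
  by move=> i hi; rewrite /seg_sign (_ : L - i = 0) //; lia.
have E2 : (\sum_(i < size nu) Posz (L - i))%R = Posz (\sum_(i < L) (L - i)).
  rewrite Posz_sum; symmetry; apply: (big_ord_widen_idx +%R (F := fun i => Posz (L - i)) hM).
  by move=> i hi; rewrite (_ : L - i = 0) //; lia.
have [_ E4] := staircase_sign_even s.
rewrite E1 E2 -Posz_sum -psize_rows E4 in exchange.
have T := triangle_sum L.
move: exchange T; move: (\sum_(i < L) (L - i)) => T exchange T1.
nia.
Qed.

(* The length of column j, i.e. the j-th part of the conjugate partition. *)
Definition col (nu : seq nat) j := count (fun a => j < a) nu.

Lemma colP nu j i : sorted geq nu -> (i < col nu j) = (j < nth 0 nu i).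
Proof.
elim: nu i => [|a t IH] i /=; first by rewrite nth_nil ltn0.
move=> hs; have hall := order_path_min geq_trans hs.
case: (ltnP j a) => hja /=.
  by case: i => [|i] //=; rewrite ltnS IH // (path_sorted hs).
have -> : col t j = 0.
  apply/eqP; rewrite -leqn0 leqNgt -has_count; apply/hasPn => x hx /=.
  by move/allP: hall => /(_ x hx) /= hx'; lia.
case: i => [|i] /=; first lia.
case: (ltnP i (size t)) => hi; last by rewrite nth_default.
by move/allP: hall => /(_ _ (mem_nth 0 hi)) /= h; lia.
Qed.

Lemma col_le nu j : col nu j <= size nu.
Proof. exact: count_size. Qed.

Lemma col_mono nu j j' : j <= j' -> col nu j' <= col nu j.
Proof. by move=> h; apply: sub_count => x /=; lia. Qed.

Lemma col_contains_staircase s nu : sorted geq nu -> contains_staircase s nu ->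
  forall j, j < 2 * s -> 2 * s - j <= col nu j.
Proof.
move=> hsort Hc j hj.
have hst : 2 * s - (2 * s - j - 1) <= nth 0 nu (2 * s - j - 1) by apply: Hc; lia.
have : 2 * s - j - 1 < col nu j by rewrite colP //; lia.
lia.
Qed.

Lemma sum_parity_eq0 n (f : nat -> nat) :
  (\sum_(i < n) parity (f i) = 0)%R -> forall i, i < n -> 2 %| f i.
Proof.
move=> H i hi.
have H0 (i1 : 'I_n) : true -> (0 <= parity (f i1))%R by move=> _; exact: parity_ge0.
have := psumr_eq0P H0 H (i := Ordinal hi) isT.
by rewrite /parity dvdn2 /=; case: ifP.
Qed.

Section HookDecomposition.
Variables (s i0 : nat) (nu : seq nat).
Hypotheses (nu_part : is_partition nu) (nu_stair : contains_staircase s nu).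
Hypotheses (gap_le : i0 <= 2 * s) (gap_row : nth 0 nu i0 <= 2 * s - i0).

(* The rows i >= i0 have at most 2s - i0 boxes, so every box of ν outside
   the staircase lies in a row i < i0 or in a column j < 2s - i0: ν is the
   hook shape with these rows and columns as arms. *)
Lemma hook_decomposition i j :
  (j < nth 0 nu i) = hook_shape s i0 (2 * s - i0) (nth 0 nu) (col nu) i j.
Proof.
have [hsort _] := andP nu_part.
rewrite /hook_shape; apply/idP/idP.
- move=> h; case: (ltnP (i + j) (2 * s)) => h1; first by apply/orP; left.
  case: (ltnP i i0) => h2.
    by apply/or3P; apply: Or32; repeat (apply/andP; split) => //; lia.
  have h3 := partition_nth_mono hsort h2.
  by apply/or3P; apply: Or33; rewrite colP // h /=; repeat (apply/andP; split); lia.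
- case/or3P => [h|h|h]; split_andb => //; last by rewrite -colP.
  have hst : 2 * s - i <= nth 0 nu i by apply: nu_stair; lia.
  lia.
Qed.

(* Third step: by [box_sign_hook], an odd arm would bring cweight ν below s,
   so when cweight ν = s all arms have even length. *)
Lemma hook_arms_even : cweight nu = Posz s ->
  (forall i, i < i0 -> 2 %| nth 0 nu i - (2 * s - i)) /\
  (forall j, j < 2 * s - i0 -> 2 %| col nu j - (2 * s - j)).
Proof.
move=> hcw; have [hsort _] := andP nu_part.
set M := 2 * s + size nu + psize nu.
have hsize : size nu <= M by rewrite /M; lia.
have hparts i : nth 0 nu i <= M by have := nth_le_sumn nu i; rewrite /M /psize; lia.
have Hr i : i < i0 -> 2 * s - i <= nth 0 nu i <= M.
  by move=> hi; rewrite hparts andbT; apply: nu_stair; lia.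
have Hq j : j < 2 * s - i0 -> 2 * s - j <= col nu j <= M.
  move=> hj; have := col_le nu j; have := col_contains_staircase hsort nu_stair (j := j).
  by rewrite /M; lia.
have := box_sign_partition hsize hparts.
rewrite (eq_box_sign M hook_decomposition) box_sign_hook ?hcw; [|lia|lia|done|done].
set A := (\sum_(i < i0) _)%R; set B := (\sum_(j < _) _)%R => hAB.
have hA : (0 <= A)%R by apply: sumr_ge0 => i _; exact: parity_ge0.
have hB : (0 <= B)%R by apply: sumr_ge0 => i _; exact: parity_ge0.
by split; apply: sum_parity_eq0; rewrite -/A -/B; lia.
Qed.

End HookDecomposition.

Lemma partition_of_decreasing (g : nat -> nat) n :
  (forall i, i.+1 < n -> g i.+1 <= g i) ->
  exists lam, [/\ is_partition lam, size lam <= n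
                & forall i, nth 0 lam i = if i < n then g i else 0].
Proof.
move=> Hg; pose g' i := if i < n then g i else 0.
have g'_mono : {homo g' : i j / i <= j >-> j <= i}.
  apply: (@homo_leq _ g' (fun a b => b <= a)) => [x|y x z h1 h2|i].
  - exact: leqnn.
  - exact: leq_trans h2 h1.
  rewrite /g'; case: (ltnP i.+1 n) => h1 //.
  by rewrite (ltnW h1); exact: Hg.
set rows := [seq g' i | i <- iota 0 n].
have Hs : sorted geq rows.
  by apply: (homo_sorted (e := leq)); [move=> x y; exact: g'_mono | exact: iota_sorted].
have Hnth i : nth 0 [seq x <- rows | 0 < x] i = g' i.
  rewrite nth_filter_pos //; case: (ltnP i n) => hi.
    by rewrite (nth_map 0) ?size_iota // nth_iota.
  by rewrite nth_default ?size_map ?size_iota // /g' ltnNge hi.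
exists [seq x <- rows | 0 < x]; split => //.
- by rewrite /is_partition sorted_filter ?filter_all //; exact: geq_trans.
- by rewrite size_filter (leq_trans (count_size _ _)) // size_map size_iota.
Qed.

Lemma halve_arms s n (r : nat -> nat) :
  (forall i, i < n -> 2 * s - i <= r i) ->
  (forall i, i < n -> 2 %| r i - (2 * s - i)) ->
  (forall i, i.+1 < n -> r i.+1 <= r i) ->
  exists lam, [/\ is_partition lam, size lam <= n
                & forall i, i < n -> r i = 2 * s - i + 2 * nth 0 lam i].
Proof.
move=> Hge Hev Hdec.
have [lam [Hp Hsz Hnth]] := @partition_of_decreasing (fun i => (r i - (2 * s - i)) %/ 2) n
  (fun i hi => ltac:(have := Hge i (ltnW hi); have := Hge i.+1 hi;
                     have := Hev i (ltnW hi); have := Hev i.+1 hi;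
                     have := Hdec i hi; lia)).
exists lam; split => // i hi; rewrite Hnth hi.
by have := Hge i hi; have := Hev i hi; lia.
Qed.

Lemma hook_shape_lambda s i0 j0 (r q : nat -> nat) lam mu :
  size lam <= i0 -> size mu <= j0 ->
  (forall i, i < i0 -> r i = 2 * s - i + 2 * nth 0 lam i) ->
  (forall j, j < j0 -> q j = 2 * s - j + 2 * nth 0 mu j) ->
  hook_shape s i0 j0 r q =2 lambda_shape s lam mu.
Proof.
move=> Hl Hm Hr Hq i j; rewrite /lambda_shape /hook_shape; congr [|| _, _ | _].
- case: (ltnP i i0) => hi /=; last by apply/esym/negbTE/negP => H; split_andb; lia.
  rewrite Hr //; case: (ltnP i (size lam)) => hl //=.
  by rewrite nth_default //; apply/negbTE/negP => H; split_andb; lia.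
- case: (ltnP j j0) => hj /=; last by apply/esym/negbTE/negP => H; split_andb; lia.
  rewrite Hq //; case: (ltnP j (size mu)) => hm //=.
  by rewrite nth_default //; apply/negbTE/negP => H; split_andb; lia.
Qed.

Lemma lambda_shape_surj s k nu : k < 2 * s -> is_partition nu -> cweight nu = Posz s ->
  psize nu <= s * (2 * s + 1) + 2 * k ->
  exists lam mu : seq nat,
    [/\ is_partition lam, is_partition mu, psize lam + psize mu <= k
      & forall p, diagram nu p = Lset s lam mu p].
Proof.
move=> hk hp hcw hsz; have [hsort _] := andP hp.
have hcw_ge : (Posz s <= cweight nu)%R by rewrite hcw.
have Hc : contains_staircase s nu by exact: staircase_contained.
have [i0 hi0 hgap] := staircase_gap hcw_ge hsz hk.
have [even_rows even_cols] := hook_arms_even hp Hc hi0 hgap hcw.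
have row_ge i : i < i0 -> 2 * s - i <= nth 0 nu i by move=> hi; apply: Hc; lia.
have col_ge j : j < 2 * s - i0 -> 2 * s - j <= col nu j.
  by move=> hj; apply: col_contains_staircase => //; lia.
have [lam [hlp hls hlr]] :=
  halve_arms row_ge even_rows (fun i _ => partition_nth_mono hsort (leqnSn i)).
have [mu [hmp hms hmq]] := halve_arms col_ge even_cols (fun j _ => col_mono nu (leqnSn j)).
have Hshape i j : (j < nth 0 nu i) = lambda_shape s lam mu i j.
  by rewrite (hook_decomposition hp Hc hi0 hgap) (hook_shape_lambda hls hms hlr hmq).
have hsizes : size lam + size mu <= 2 * s by lia.
exists lam, mu; split => //; last by apply: diagram_eq_Lset => //; lia.
pose M := 2 * s + 2 * (psize lam + psize mu) + 1 + psize nu.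
have hrows : size nu <= M by have := size_le_psize (proj2 (andP hp)); rewrite /M; lia.
have hparts i : nth 0 nu i <= M by have := nth_le_sumn nu i; rewrite /M /psize; lia.
have := box_count_partition hrows hparts.
by rewrite (eq_box_count M Hshape) box_count_lambda //; [lia | rewrite /M; lia].
Qed.

(* A partition has at most |λ| parts, so |λ| + |μ| <= k < 2s bounds the
   total number of arms. *)
Lemma sizes_lt_of_psize s k lam mu : is_partition lam -> is_partition mu ->
  psize lam + psize mu <= k -> k < 2 * s -> size lam + size mu < 2 * s.
Proof.
move=> /andP [_ /size_le_psize hl] /andP [_ /size_le_psize hm] hk hks; lia.
Qed.

Local Open Scope ring_scope.

Theorem lemma4p1 (s k : nat) (hs : (1 <= s)%N) (hsk : (k < 2 * s)%N) :
  (* (a) *)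
  (forall lam mu : seq nat, is_partition lam -> is_partition mu ->
     (psize lam + psize mu <= k)%N ->
     exists nu : seq nat,
       [/\ is_partition nu,
           (forall p, diagram nu p = Lset s lam mu p),
           psize nu = (s * (2 * s + 1) + 2 * psize lam + 2 * psize mu)%N
         & cweight nu = s%:Z]) /\
  (* (b) injectivity *)
  (forall lam mu lam' mu' : seq nat,
     is_partition lam -> is_partition mu -> (psize lam + psize mu <= k)%N ->
     is_partition lam' -> is_partition mu' -> (psize lam' + psize mu' <= k)%N ->
     (forall p, Lset s lam mu p = Lset s lam' mu' p) ->
     lam = lam' /\ mu = mu') /\
  (* (b) surjectivity onto {nu : cweight nu = s, |nu| <= s(2s+1)+2k} *)
  (forall nu : seq nat, is_partition nu -> cweight nu = s%:Z ->
     (psize nu <= s * (2 * s + 1) + 2 * k)%N ->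
     exists lam mu : seq nat,
       [/\ is_partition lam, is_partition mu, (psize lam + psize mu <= k)%N
         & forall p, diagram nu p = Lset s lam mu p]).
Proof.
split; [|split].
- move=> lam mu hl hm hk; apply: lambda_shape_partition => //.
  by have := sizes_lt_of_psize hl hm hk hsk; lia.
- move=> lam mu lam' mu' hl hm hk hl' hm' hk'.
  by apply: lambda_shape_inj => //; apply: sizes_lt_of_psize hsk.
- by move=> nu hp hcw hsz; apply: lambda_shape_surj hsk hp hcw hsz.
Qed.
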